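(* Let $q\ge 1$ be an integer and consider an instance of \textsc{Min-Lin-Eq$(q)$-Full} on the complete graph $G=(V,E)$ with $n=|V|$ vertices, given by integers $c_{uv}\in\{0,\dots,q-1\}$ for every ordered pair of distinct vertices with $c_{vu}\equiv -c_{uv}\pmod q$. Let $\mathrm{OPT_{val}}$ be the minimum, over all assignments $x:V\to\{0,\dots,q-1\}$, of the number of edges $uv$ whose constraint $x_u-x_v\equiv c_{uv}\pmod q$ is violated. Run the Pivot Algorithm: choose a pivot $p\in V$ uniformly at random, set $\ell(p)=0$ and $\ell(v)=c_{vp}$ for every $v\neq p$. Then the Pivot Algorithm is a $3$-approximation algorithm for this problem, i.e. the expected number of edges whose constraints are violated by the labeling $\ell$ is at most $3\cdot \mathrm{OPT_{val}}$.
   Context: \textsc{Min-Lin-Eq$(q)$-Full}: given a complete simple graph $G=(V,E)$, a positive integer $q$, and for each ordered pair $(u,v)$ of distinct vertices an integer $c_{uv}\in[q]=\{0,\dots,q-1\}$ with $c_{vu}=q-c_{uv}\bmod q$, each edge $uv$ carries the constraint $x_u-x_v\equiv c_{uv}\pmod q$ on an assignment $x:V\to[q]$. The goal is to find a minimum-cardinality set of edges whose deletion leaves a satisfiable set of constraints, equivalently an assignment minimizing the number of violated edge constraints. *)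

From mathcomp Require Import all_boot.
Set Implicit Arguments. Unset Strict Implicit. Unset Printing Implicit Defensive.

(* Instance of Min-Lin-Eq(q)-Full on the complete graph with vertex set V.
   c u v is the integer c_{uv} in [q] = {0,..,q-1} for the ordered pair (u,v). *)

Definition valid_instance (V : finType) (q : nat) (c : V -> V -> nat) : Prop :=
  0 < q /\ (forall u v, u != v -> c u v < q) /\
  (forall u v, u != v -> c v u = (q - c u v) %% q).

(* The constraint x_u - x_v = c_uv (mod q) on edge uv, written in nat as
   x_u = x_v + c_uv (mod q). *)
Definition violated (V : finType) (q : nat) (c : V -> V -> nat) (x : V -> nat)
  (u v : V) : bool := x u != x v + c u v %[mod q].

Definition violated_edges (V : finType) (q : nat) (c : V -> V -> nat)
  (x : V -> nat) : {set {set V}} :=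
  [set e : {set V} | [exists u : V, exists v : V,
      [&& u != v, e == [set u; v] & violated q c x u v]]].

Definition cost (V : finType) (q : nat) (c : V -> V -> nat) (x : V -> nat) : nat :=
  #|violated_edges q c x|.

Definition OPT_val (V : finType) (q : nat) (c : V -> V -> nat) : nat :=
  \big[minn/cost q c (fun _ => 0)]_(x : {ffun V -> 'I_q})
      cost q c (fun v => nat_of_ord (x v)).

Definition pivot_label (V : finType) (c : V -> V -> nat) (p : V) : V -> nat :=
  fun v => if v == p then 0 else c v p.

From mathcomp Require Import all_boot.
From mathcomp Require Import zify.
Set Implicit Arguments. Unset Strict Implicit. Unset Printing Implicit Defensive.

(* Compare the pivot labeling l_p with an arbitrary assignment x.  Edges at
   p are never violated by l_p, and if x satisfies all three constraints of a
   triangle u v p then l_p satisfies the one on uv, because l_p agrees with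
   x - x_p modulo q on u and v.  So every ordered pair violated by l_p is
   violated by x or has an endpoint in the set N(p) of vertices joined to p by
   an x-violated edge.  Summing over p, each x-violated edge is charged n times
   directly and 2n times through N, so the costs of the l_p sum to at most
   3 n cost(x). *)

Lemma set2_inj (T : finType) (u v a b : T) : u != v ->
  [set u; v] = [set a; b] -> (u, v) = (a, b) \/ (u, v) = (b, a).
Proof.
move=> neq_uv eq_uv_ab.
have u_ab : u \in [set a; b] by rewrite -eq_uv_ab set21.
have v_ab : v \in [set a; b] by rewrite -eq_uv_ab set22.
case/set2P: u_ab neq_uv => ->; case/set2P: v_ab => -> neq_uv;
  by [left | right | rewrite eqxx in neq_uv].
Qed.

Section UndirectedEdges.
Variables (T : finType) (r : rel T).
Hypothesis r_sym : forall u v, u != v -> r u v = r v u.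

Definition edges_of : {set {set T}} :=
  [set e : {set T} |
    [exists u, exists v, [&& u != v, e == [set u; v] & r u v]]].

Definition arcs_of : {set T * T} := [set uv | (uv.1 != uv.2) && r uv.1 uv.2].

Lemma arcs_of_edge (a b : T) : a != b -> r a b ->
  [set uv in arcs_of | [set uv.1; uv.2] == [set a; b]] = [set (a, b); (b, a)].
Proof.
move=> neq_ab r_ab; apply/setP => -[u v]; rewrite !inE /=.
apply/idP/idP.
- case/andP=> /andP[neq_uv _] /eqP/(set2_inj neq_uv)[] [-> ->];
    by rewrite eqxx ?orbT.
- case/orP=> /eqP[-> ->]; first by rewrite neq_ab r_ab eqxx.
  by rewrite eq_sym neq_ab -r_sym // r_ab setUC eqxx.
Qed.

Lemma double_card_edges_of : 2 * #|edges_of| = #|arcs_of|.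
Proof.
rewrite -sum1_card big_distrr /= -[RHS]sum1_card.
rewrite (partition_big (fun uv : T * T => [set uv.1; uv.2]) (mem edges_of)) /=.
  apply: eq_bigr => e; rewrite inE => /existsP[a /existsP[b]].
  case/and3P=> neq_ab /eqP-> r_ab.
  rewrite sum1dep_card arcs_of_edge // cards2 muln1.
  by rewrite xpair_eqE (negbTE neq_ab).
move=> [u v]; rewrite !inE /= => /andP[neq_uv r_uv].
by apply/existsP; exists u; apply/existsP; exists v; rewrite neq_uv eqxx r_uv.
Qed.

Definition in_nbhd (p : T) : {set T} := [set u | (u != p) && r u p].

Lemma sum_card_in_nbhd : \sum_p #|in_nbhd p| = #|arcs_of|.
Proof.
rewrite -sum1dep_card [RHS]big_mkcond /=.
rewrite -(pair_bigA _ (fun u v => if (u != v) && r u v then 1 else 0)) /=.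
rewrite exchange_big; apply: eq_bigr => p _.
by rewrite -sum1dep_card big_mkcond.
Qed.

End UndirectedEdges.

Section PivotLabeling.
Variables (V : finType) (q : nat) (c : V -> V -> nat).
Implicit Types (x : V -> nat) (p u v : V).

Lemma pivot_label_to_pivot p u :
  u != p -> ~~ violated q c (pivot_label c p) u p.
Proof.
move=> neq_up.
by rewrite /violated /pivot_label eqxx (negbTE neq_up) add0n eqxx.
Qed.

Lemma pivot_label_triangle x p u v : u != p -> v != p ->
  ~~ violated q c x u v -> ~~ violated q c x u p -> ~~ violated q c x v p ->
  ~~ violated q c (pivot_label c p) u v.
Proof.
move=> neq_up neq_vp.
rewrite /violated /pivot_label (negbTE neq_up) (negbTE neq_vp) !negbK.
move=> /eqP x_uv /eqP x_up /eqP x_vp.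
rewrite -(eqn_modDl (x p)) addnA; apply/eqP.
by rewrite -[in RHS]modnDml -x_vp modnDml -x_uv x_up.
Qed.

Hypothesis valid : valid_instance q c.

Lemma violatedC x u v : u != v -> violated q c x u v = violated q c x v u.
Proof.
case: valid => _ [c_lt c_opp] neq_uv.
rewrite /violated (c_opp u v neq_uv) modnDmr; congr negb.
rewrite -(eqn_modDr (c u v) (x v)) -addnA subnK ?(ltnW (c_lt _ _ neq_uv)) //.
by rewrite modnDr eq_sym.
Qed.

Lemma pivot_label_from_pivot p v :
  v != p -> ~~ violated q c (pivot_label c p) p v.
Proof.
case: valid => _ [c_lt c_opp] neq_vp.
rewrite /violated /pivot_label eqxx (negbTE neq_vp) (c_opp v p neq_vp) modnDmr.
by rewrite subnKC ?(ltnW (c_lt _ _ neq_vp)) // modnn mod0n eqxx.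
Qed.

Lemma double_cost x : 2 * cost q c x = #|arcs_of (violated q c x)|.
Proof. exact/double_card_edges_of/violatedC. Qed.

Lemma arcs_pivot_label_sub x p :
  arcs_of (violated q c (pivot_label c p)) \subset
  arcs_of (violated q c x) :|: setX (in_nbhd (violated q c x) p) setT
                       :|: setX setT (in_nbhd (violated q c x) p).
Proof.
apply/subsetP => -[u v]; rewrite !inE /= => /andP[neq_uv viol_uv].
have neq_up : u != p.
  apply: contraTneq viol_uv => eq_up; rewrite eq_up in neq_uv *.
  by apply: pivot_label_from_pivot; rewrite eq_sym.
have neq_vp : v != p.
  by apply: contraTneq viol_uv => ->; apply: pivot_label_to_pivot.
rewrite neq_uv neq_up neq_vp /= andbT -!negb_and.
apply: contraL viol_uv => /andP[/andP[ok_uv ok_up] ok_vp].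
apply: (pivot_label_triangle (x := x) neq_up neq_vp);
  by rewrite /violated negbK.
Qed.

Lemma card_arcs_pivot_label x p :
  #|arcs_of (violated q c (pivot_label c p))| <=
  #|arcs_of (violated q c x)| + 2 * (#|in_nbhd (violated q c x) p| * #|V|).
Proof.
apply: leq_trans (subset_leq_card (arcs_pivot_label_sub x p)) _.
rewrite mul2n -addnn addnA.
apply: leq_trans (leq_card_setU _ _) _; rewrite cardsX cardsT mulnC leq_add2r.
by apply: leq_trans (leq_card_setU _ _) _; rewrite cardsX cardsT.
Qed.

Lemma sum_cost_pivot_label x :
  \sum_p cost q c (pivot_label c p) <= 3 * #|V| * cost q c x.
Proof.
rewrite -(leq_pmul2l (isT : 0 < 2)) big_distrr /=.
under eq_bigr do rewrite double_cost.
apply: leq_trans.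
  by apply: leq_sum => p _; apply: (card_arcs_pivot_label x).
rewrite big_split /= sum_nat_const -big_distrr -big_distrl /=.
rewrite sum_card_in_nbhd -double_cost cardT; lia.
Qed.

End PivotLabeling.

Lemma OPT_val_attained (V : finType) (q : nat) (c : V -> V -> nat) :
  exists x : V -> nat, OPT_val q c = cost q c x.
Proof.
apply: (big_ind (fun m => exists x : V -> nat, m = cost q c x)).
- by exists (fun _ => 0).
- by move=> _ _ [xa ->] [xb ->]; rewrite /minn; case: ifP; eexists.
- by move=> x _; exists (fun v => nat_of_ord (x v)).
Qed.

Theorem theorem1 (V : finType) (q : nat) (c : V -> V -> nat) :
  valid_instance q c ->
  0 < #|V| ->
  \sum_(p : V) cost q c (pivot_label c p) <= 3 * #|V| * OPT_val q c.
Proof.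
move=> valid _; have [x ->] := OPT_val_attained q c.
exact: sum_cost_pivot_label.
Qed.
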